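(* Let $p$ be an odd prime and let $\mathcal{A}=(G_x,G_e,G_{xy})$ be a finite, primitive amalgam of degree $(p,2)$. If $q$ is a prime dividing $|G_{xy}|$, then $q<p$.
   Context: An amalgam $(A_1,A_2,B,\pi_1,\pi_2)$ consists of groups with monomorphisms $\pi_i:B\to A_i$; here $G_{xy}$ is identified with its images in $G_x$ and $G_e$. Degree $(p,2)$ means $|G_x:G_{xy}|=p$ and $|G_e:G_{xy}|=2$; finite means $G_{xy}$ is finite; primitive means the only subgroup of $G_{xy}$ normal in both $G_x$ and $G_e$ is trivial. *)

From mathcomp Require Import all_boot all_fingroup.
Set Implicit Arguments. Unset Strict Implicit. Unset Printing Implicit Defensive.
Local Open Scope group_scope.

Definition amalgam (gT1 gT2 bT : finGroupType)
    (A1 : {group gT1}) (A2 : {group gT2}) (B : {group bT})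
    (pi1 : {morphism B >-> gT1}) (pi2 : {morphism B >-> gT2}) : Prop :=
  [/\ 'injm pi1, pi1 @* B \subset A1, 'injm pi2 & pi2 @* B \subset A2].

Definition amalgam_degree (gT1 gT2 bT : finGroupType)
    (A1 : {group gT1}) (A2 : {group gT2}) (B : {group bT})
    (pi1 : {morphism B >-> gT1}) (pi2 : {morphism B >-> gT2}) (m n : nat) : Prop :=
  #|A1 : pi1 @* B| = m /\ #|A2 : pi2 @* B| = n.

Definition amalgam_primitive (gT1 gT2 bT : finGroupType)
    (A1 : {group gT1}) (A2 : {group gT2}) (B : {group bT})
    (pi1 : {morphism B >-> gT1}) (pi2 : {morphism B >-> gT2}) : Prop :=
  forall K : {group bT}, K \subset B ->
    pi1 @* K <| A1 -> pi2 @* K <| A2 -> K :=: 1.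

From mathcomp Require Import all_boot all_fingroup.
From mathcomp Require Import pgroup sylow.
Set Implicit Arguments. Unset Strict Implicit. Unset Printing Implicit Defensive.
Local Open Scope group_scope.

(* Suppose q >= p and let T be the subgroup of B generated by
   its q-elements.  We show that pi1(T) <| A1 and pi2(T) <| A2, so T = 1 by
   primitivity; but B contains an element of order q by Cauchy, a contradiction.
   - pi2(B) has index 2 in A2, hence is normal, so its q-elements are permuted
     by conjugation in A2.
   - pi1(B) has prime index p <= q in A1.  For a q-element x of a subgroup C of
     index p in A and any g in A, the index |<x> : <x> n C^g| is a power of q
     that is at most p, hence it is 1 or p; in the first case x lies in C^g, in
     the second <x>C^g = A forces g in C.  So every q-element of C lies in
     every conjugate of C, i.e. the q-elements of C are permuted by A. *)

Section Subgroups.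

Variable gT : finGroupType.
Implicit Types (A C D X : {group gT}) (g x : gT).

Lemma card_mulg_index X D : #|X * D| = (#|X : X :&: D| * #|D|)%N.
Proof.
apply/eqP; rewrite -(eqn_pmul2r (cardG_gt0 (X :&: D))) -mul_cardG.
by rewrite -(Lagrange (subsetIl X D)) -mulnA mulnC.
Qed.

Lemma mem_mul_conjG C g : g \in C * C :^ g -> g \in C.
Proof.
case/mulsgP=> c d Cc; rewrite mem_conjg => Cd eq_g.
have -> : g = (d ^ g^-1) * c.
  by rewrite conjgE invgK {3}eq_g invMg mulKVg mulgKV.
by rewrite groupM.
Qed.

Lemma qelt_in_conjugates A C (p q : nat) x g :
    C \subset A -> #|A : C| = p -> prime q -> p <= q ->
    x \in C -> q.-elt x -> g \in A -> x \in C :^ g.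
Proof.
move=> sCA iAC q_pr le_pq Cx qx Ag.
set X := <[x]>; set D := (C :^ g)%G.
have sXC : X \subset C by rewrite cycle_subG.
have sXDA : X * D \subset A.
  by rewrite mul_subG ?(subset_trans sXC) // sub_conjg (normsP (normG A)) ?groupV.
have cardA : #|A| = (p * #|C|)%N by rewrite -iAC mulnC Lagrange.
have cardXD : #|X * D| = (#|X : X :&: D| * #|C|)%N by rewrite card_mulg_index cardJg.
have le_ip : #|X : X :&: D| <= p.
  by rewrite -(leq_pmul2r (cardG_gt0 C)) -cardXD -cardA subset_leq_card.
have q_i : q.-nat #|X : X :&: D|.
  by apply: pnat_dvd qx; rewrite -[#[x]]/#|X| -(Lagrange (subsetIl X D)) dvdn_mull.
have [k def_i] := p_natP q_i.
case: k def_i => [|k] def_i.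
  have sXD : X \subset D by apply/setIidPl/index1g; rewrite ?subsetIl ?def_i.
  by rewrite -cycle_subG.
have i_p : #|X : X :&: D| = p.
  apply/eqP; rewrite eqn_leq le_ip (leq_trans le_pq) // def_i expnS.
  by rewrite leq_pmulr ?expn_gt0 ?prime_gt0.
have eqXDA : X * D = A.
  by apply/eqP; rewrite eqEcard sXDA cardXD i_p cardA leqnn.
have Cg : g \in C by apply: mem_mul_conjG; rewrite (subsetP (mulSg D sXC)) // eqXDA.
by rewrite conjGid.
Qed.

Lemma qelt_gen_normal A (H : {group gT}) (q : nat) :
    H \subset A ->
    (forall a y, a \in A -> y \in H -> q.-elt y -> y \in H :^ a) ->
  <<[set y in H | q.-elt y]>> <| A.
Proof.
move=> sHA qHJ; rewrite /normal gen_subG; apply/andP; split.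
  by apply/subsetP=> z; rewrite inE => /andP[Hz _]; apply: (subsetP sHA).
apply: norms_gen; apply/subsetP=> a Aa; rewrite inE; apply/subsetP=> z.
rewrite mem_conjg !inE => /andP[Hz qz].
have := qHJ _ _ (groupVr Aa) Hz qz; rewrite mem_conjgV conjgKV => ->.
by rewrite p_eltJ in qz.
Qed.

End Subgroups.

Lemma qelt_gen_nontrivial (gT : finGroupType) (H : {group gT}) (q : nat) :
  prime q -> q %| #|H| -> <<[set y in H | q.-elt y]>> != 1.
Proof.
move=> q_pr qH; have [x Hx ox] := Cauchy q_pr qH.
apply/trivgPn; exists x; last by rewrite -order_eq1 ox gtn_eqF ?prime_gt1.
by rewrite mem_gen // inE Hx /p_elt ox pnat_id.
Qed.

Lemma injm_qelt_gen (aT rT : finGroupType) (D : {group aT})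
    (f : {morphism D >-> rT}) (q : nat) : 'injm f ->
  f @* <<[set y in D | q.-elt y]>> = <<[set y in f @* D | q.-elt y]>>.
Proof.
move=> injf; rewrite morphim_gen; last first.
  by apply/subsetP=> z; rewrite inE => /andP[].
congr <<_>>; apply/setP => z; rewrite inE; apply/morphimP/andP.
  case=> y Dy; rewrite inE => /andP[_ qy] ->.
  by rewrite mem_morphim // injm_pelt.
case=> /morphimP[y Dy _ ->] qz; exists y => //.
by rewrite inE Dy -(injm_pelt injf).
Qed.

Theorem mainTheorem4 (gT1 gT2 bT : finGroupType)
    (A1 : {group gT1}) (A2 : {group gT2}) (B : {group bT})
    (pi1 : {morphism B >-> gT1}) (pi2 : {morphism B >-> gT2}) (p : nat) :
  prime p -> odd p ->
  amalgam A1 A2 pi1 pi2 ->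
  amalgam_degree A1 A2 pi1 pi2 p 2 ->
  amalgam_primitive A1 A2 pi1 pi2 ->
  forall q : nat, prime q -> q %| #|B| -> q < p.
Proof.
move=> _ _ [inj1 sBA1 inj2 sBA2] [iA1 iA2] prim q q_pr qB.
rewrite ltnNge; apply/negP => le_pq.
set T := <<[set y in B | q.-elt y]>>.
have sTB : T \subset B.
  by rewrite gen_subG; apply/subsetP=> z; rewrite inE => /andP[].
have nTA1 : pi1 @* T <| A1.
  rewrite injm_qelt_gen //; apply: qelt_gen_normal => // a y Aa By qy.
  exact: qelt_in_conjugates sBA1 iA1 q_pr le_pq By qy Aa.
have nTA2 : pi2 @* T <| A2.
  rewrite injm_qelt_gen //; apply: qelt_gen_normal => // a y Aa By _.
  have nBA2 := normal_norm (index2_normal sBA2 iA2).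
  by rewrite (normsP nBA2).
have /= T1 := prim [group of T] sTB nTA1 nTA2.
by have := qelt_gen_nontrivial q_pr qB; rewrite -/T T1 eqxx.
Qed.
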